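(* If $X\ge0$ almost surely and $X$ is non-degenerate, then $X\notin\mathcal{D}^+$.
   Context: For real random variables, $X \le_{st} Y$ means $P(X\le t)\ge P(Y\le t)$ for all $t\in\mathbb{R}$. A real random variable $X$ (equivalently its distribution function $F_X$) belongs to $\mathcal{D}^+$ if for every $n\in\mathbb{N}$, all $\theta_1,\dots,\theta_n\ge 0$ with $\sum_{i=1}^n\theta_i=1$, and i.i.d. random variables $X_1,\dots,X_n$ with distribution $F_X$, we have $\sum_{i=1}^n\theta_iX_i\le_{st}X_1$. *)

From HB Require Import structures.
From mathcomp Require Import all_boot all_order all_algebra.
From mathcomp Require Import all_classical all_reals all_analysis.
Set Implicit Arguments. Unset Strict Implicit. Unset Printing Implicit Defensive.
Import Order.TTheory GRing.Theory Num.Theory.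
Local Open Scope classical_set_scope.
Local Open Scope ring_scope.

Definition mutually_independent (R : realType) (d : measure_display)
    (T : measurableType d) (Q : probability T R) (m : nat)
    (Y : 'I_m -> {RV Q >-> R}) : Prop :=
  forall B : 'I_m -> set R, (forall i, measurable (B i)) ->
    Q (\bigcap_i (Y i @^-1` B i)) = (\prod_i Q (Y i @^-1` B i))%E.

Definition same_distribution (R : realType)
    (d1 : measure_display) (T1 : measurableType d1) (P1 : probability T1 R)
    (X : {RV P1 >-> R})
    (d2 : measure_display) (T2 : measurableType d2) (P2 : probability T2 R)
    (Y : {RV P2 >-> R}) : Prop :=
  forall A : set R, measurable A -> P2 (Y @^-1` A) = P1 (X @^-1` A).

Definition stoch_le (R : realType)
    (d1 : measure_display) (T1 : measurableType d1) (P1 : probability T1 R)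
    (U : T1 -> R)
    (d2 : measure_display) (T2 : measurableType d2) (P2 : probability T2 R)
    (V : T2 -> R) : Prop :=
  forall t : R, (P2 (V @^-1` `]-oo, t]) <= P1 (U @^-1` `]-oo, t]))%E.

(* X (i.e. its distribution) belongs to D^+ : for every n >= 1 (indices
   'I_n.+1), all weights theta >= 0 summing to 1 and all i.i.d. copies
   X_1, ..., X_n of X on any probability space, sum theta_i X_i <=st X_1. *)
Definition in_Dplus (R : realType) (d : measure_display) (T : measurableType d)
    (P : probability T R) (X : {RV P >-> R}) : Prop :=
  forall (n : nat) (theta : 'I_n.+1 -> R),
    (forall i, 0 <= theta i) -> \sum_i theta i = 1 ->
  forall (d' : measure_display) (T' : measurableType d') (Q : probability T' R)
         (Y : 'I_n.+1 -> {RV Q >-> R}),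
    mutually_independent Y ->
    (forall i, same_distribution X (Y i)) ->
    stoch_le Q (fun w => \sum_i theta i * Y i w) Q (Y ord0).

Definition degenerate (R : realType) (d : measure_display) (T : measurableType d)
    (P : probability T R) (X : {RV P >-> R}) : Prop :=
  exists c : R, P (X @^-1` [set c]) = 1%E.

From HB Require Import structures.
From mathcomp Require Import all_boot all_order all_algebra.
From mathcomp Require Import all_classical all_reals all_analysis.
From mathcomp Require Import measurable_realfun ess_sup_inf ring lra.
Set Implicit Arguments. Unset Strict Implicit. Unset Printing Implicit Defensive.
Import Order.TTheory GRing.Theory Num.Theory.
Local Open Scope classical_set_scope.
Local Open Scope ring_scope.

(* Let [m] be the essential infimum of [X] and [phi l = E[exp (- l (X - m))]].
   Applying the D^+ condition to two independent copies with weights 1/2 gives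
   [(X1 + X2) / 2 <=st X]; as [x |-> exp (- l (x - m))] is decreasing, this
   yields [phi l <= phi (l / 2) ^ 2], hence [phi l <= phi (l / 2^k) ^ (2^k)].
   Non-degeneracy puts a mass [r > 0] at distance [b > 0] above [m], so that
   [phi s <= 1 - r (1 - exp (- s b)) <= exp (- r b s / 2)] for small [s], and
   iterating gives [phi l <= exp (- r b l / 2)] for every [l > 0].  But
   [p = P (X <= m + r b / 4)] is positive, which forces
   [phi l >= p exp (- r b l / 4)], false for large [l]. *)

Lemma onem_expN_ge_half (R : realType) (y : R) : 0 <= y <= 1 -> y / 2 <= 1 - expR (- y).
Proof.
case/andP=> y0 y1.
have y1_gt0 : 0 < 1 + y by lra.
have : expR (- y) <= (1 + y)^-1.
  by rewrite expRN lef_pV2 ?posrE ?expR_gt0 // expR_ge1Dx.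
suff : (1 + y)^-1 <= 1 - y / 2 by lra.
rewrite -[(1 + y)^-1]div1r (@ler_pdivrMr _ (1 + y)) //; nra.
Qed.

Lemma le_pow_half_iter (R : realType) (phi : R -> R) :
  (forall l, 0 < l -> 0 <= phi l) ->
  (forall l, 0 < l -> phi l <= phi (l / 2) ^+ 2) ->
  forall k l, 0 < l -> phi l <= phi (l / 2 ^+ k) ^+ (2 ^ k).
Proof.
move=> phi0 phi_sqr; elim=> [|k IHk] l l0; first by rewrite expr0 divr1 expn0 expr1.
apply: (le_trans (IHk l l0)).
have lk0 : 0 < l / 2 ^+ k by rewrite divr_gt0 // exprn_gt0.
rewrite expnS exprM [2 ^+ k.+1]exprSr invfM mulrA.
by rewrite lerXn2r ?nnegrE ?phi0 ?phi_sqr // exprn_ge0 // phi0 // divr_gt0.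
Qed.

Lemma sqr_half_expN_decay (R : realType) (phi : R -> R) (r b : R) :
  0 <= r -> 0 < b ->
  (forall l, 0 < l -> 0 <= phi l) ->
  (forall l, 0 < l -> phi l <= phi (l / 2) ^+ 2) ->
  (forall l, 0 < l -> phi l <= 1 - r * (1 - expR (- (l * b)))) ->
  forall l, 0 < l -> phi l <= expR (- (r * b * l / 2)).
Proof.
move=> r0 b0 phi0 phi_sqr phi_le l l0.
have [k lb_le] : exists k, l * b <= 2 ^+ k.
  exists (Num.Def.archi_bound (l * b)).
  apply: le_trans (ltW (archi_boundP _)) _; first by rewrite mulr_ge0 // ltW.
  by rewrite -natrX ler_nat ltnW // ltn_expl.
set N := 2 ^+ k in lb_le *; have N0 : 0 < N by rewrite exprn_gt0.
set s := l / N; have s0 : 0 < s by rewrite divr_gt0.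
have sb : 0 <= s * b <= 1.
  apply/andP; split; first by rewrite mulr_ge0 // ltW.
  by rewrite /s mulrAC ler_pdivrMr // mul1r.
have phi_s : phi s <= expR (- (r * b * s / 2)).
  apply: le_trans (phi_le s s0) (le_trans _ (expR_ge1Dx _)).
  have := ler_wpM2l r0 (onem_expN_ge_half sb); lra.
apply: le_trans (le_pow_half_iter phi0 phi_sqr k l0) _; rewrite -/N -/s.
apply: le_trans (lerXn2r _ _ _ phi_s) _; rewrite ?nnegrE ?phi0 ?expR_ge0 //.
rewrite -expRM_natl natrX -/N le_eqVlt; apply/orP; left; apply/eqP; congr expR.
by rewrite /s; field; rewrite lt0r_neq0.
Qed.

Lemma sqr_half_no_expN_lower_bound (R : realType) (phi : R -> R) (r b p : R) :
  0 < r -> 0 < b -> 0 < p ->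
  (forall l, 0 < l -> 0 <= phi l) ->
  (forall l, 0 < l -> phi l <= phi (l / 2) ^+ 2) ->
  (forall l, 0 < l -> phi l <= 1 - r * (1 - expR (- (l * b)))) ->
  ~ (forall l, 0 < l -> p * expR (- (r * b * l / 4)) <= phi l).
Proof.
move=> r0 b0 p0 phi0 phi_sqr phi_le phi_ge.
pose L := 4 * (`|ln p| + 1) / (r * b).
have L0 : 0 < L by rewrite divr_gt0 ?mulr_gt0 //; have := normr_ge0 (ln p); lra.
have := le_trans (phi_ge L L0) (sqr_half_expN_decay (ltW r0) b0 phi0 phi_sqr phi_le L0).
have -> : - (r * b * L / 2) = - (r * b * L / 4) + - (r * b * L / 4) by field.
rewrite expRD ler_pM2r ?expR_gt0 //.
have -> : r * b * L / 4 = `|ln p| + 1 by rewrite /L; field; rewrite !lt0r_neq0.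
apply/negP; rewrite -ltNge -[X in _ < X]lnK ?posrE // ltr_expR.
have := ler_norm (- ln p); rewrite normrN; lra.
Qed.

Lemma ae_notP (d : measure_display) (T : measurableType d) (R : realType)
    (mu : {measure set T -> \bar R}) (A : set T) :
  measurable A -> {ae mu, forall w, ~ A w} <-> mu A = 0%E.
Proof.
move=> mA; rewrite -negligibleP //.
by change (mu.-negligible (~` ~` A) <-> mu.-negligible A); rewrite setCK.
Qed.
Arguments ae_notP {d T R} mu {A}.

Section essential_infimum.
Context (R : realType) (d : measure_display) (T : measurableType d)
  (P : probability T R) (X : {RV P >-> R}) (a : R).
Hypothesis X_ge : {ae P, forall w, a <= X w}.

Lemma ess_inf_fin_num : ess_inf P (EFin \o X) \is a fin_num.
Proof.
have ge_a : (a%:E <= ess_inf P (EFin \o X))%E.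
  by apply/ess_infP; apply: filterS X_ge => w; rewrite lee_fin.
have : ess_inf P (EFin \o X) != +oo%E.
  apply/eqP => /ess_inf_eqyP Xy.
  have /(ae_notP P measurableT) : {ae P, forall w, ~ setT w} by apply: filterS Xy.
  by move=> P0; have := probability_setT P; rewrite P0 => /eqP; rewrite eq_sym onee_eq0.
by case: ess_inf ge_a.
Qed.

Let m := fine (ess_inf P (EFin \o X)).
Let mE : ess_inf P (EFin \o X) = m%:E. Proof. by rewrite fineK // ess_inf_fin_num. Qed.

Lemma measure_lt_ess_inf : P (X @^-1` `]-oo, m[) = 0%E.
Proof.
apply/(ae_notP P (measurable_funPTI X (measurable_itv _))).
apply: filterS (ess_inf_le P (EFin \o X)) => w; rewrite mE lee_fin /= in_itv /=.
by rewrite leNgt => /negP.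
Qed.

Lemma measure_le_ess_infD_gt0 (t : R) : 0 < t -> (0 < P (X @^-1` `]-oo, (m + t)%R]))%E.
Proof.
move=> t0; rewrite lt0e measure_ge0 andbT; apply/eqP.
move/(ae_notP P (measurable_funPTI X (measurable_itv _))) => X_gt.
have : ((m + t)%:E <= ess_inf P (EFin \o X))%E.
  apply/ess_infP; apply: filterS X_gt => w /=; rewrite in_itv /= lee_fin.
  by move/negP; rewrite -ltNge => /ltW.
rewrite mE lee_fin; lra.
Qed.

Lemma nondegenerate_mass_above : ~ degenerate X ->
  exists2 b, 0 < b & (0 < P (X @^-1` `[(m + b)%R, +oo[))%E.
Proof.
move=> nondeg; apply: contrapT => no_mass; apply: nondeg; exists m.
have ae_lt b : 0 < b -> {ae P, forall w, X w < m + b}.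
  move=> b0; apply: filterS (_ : {ae P, forall w, ~ (X @^-1` `[(m + b)%R, +oo[) w}).
    by move=> w /=; rewrite in_itv /= andbT => /negP; rewrite -ltNge.
  apply/(ae_notP P (measurable_funPTI X (measurable_itv _))); apply/eqP.
  by rewrite eq_le measure_ge0 andbT leNgt; apply/negP => mass; apply: no_mass; exists b.
have /ess_supP X_le : (ess_sup P (EFin \o X) <= m%:E)%E.
  apply/lee_addgt0Pr => e e0; apply/ess_supP.
  by apply: filterS (ae_lt e e0) => w /= /ltW; rewrite lee_fin.
have Xm : P (~` (X @^-1` [set m])) = 0%E.
  apply/(ae_notP P (measurableC (measurable_funPTI X (measurable_set1 m)))).
  apply: filterS2 X_le (ess_inf_le P (EFin \o X)) => w; rewrite mE /= !lee_fin => Xle Xge.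
  by apply; apply/eqP; rewrite eq_le Xle.
rewrite -[X @^-1` _]setCK probability_setC ?Xm ?sube0 //.
exact: measurableC (measurable_funPTI X (measurable_set1 m)).
Qed.

End essential_infimum.

Definition expNsub (R : realType) (l m x : R) := expR (- (l * (x - m))).

Lemma measurable_expNsub (R : realType) (l m : R) : measurable_fun setT (expNsub l m).
Proof.
apply: measurableT_comp; first exact: measurable_expR.
apply: measurable_funN; apply: measurable_funM; first exact: measurable_cst.
by apply: measurable_funB; [exact: measurable_id | exact: measurable_cst].
Qed.

HB.instance Definition _ (R : realType) (l m : R) :=
  isMeasurableFun.Build _ _ _ _ (expNsub l m) (measurable_expNsub l m).

Section expNsub_lemmas.
Context (R : realType) (l : R).
Hypothesis l0 : 0 < l.

Lemma expNsub_gt (m r x : R) : 0 < r -> (r < expNsub l m x) = (x < m - ln r / l).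
Proof.
move=> r0; rewrite /expNsub -[X in X < _]lnK ?posrE // ltr_expR.
have -> : (x < m - ln r / l) = (l * x < l * m - ln r).
  by rewrite -(ltr_pM2l l0) mulrBr [l * (ln r / l)]mulrC mulfVK ?lt0r_neq0.
by apply/idP/idP; lra.
Qed.

Lemma expNsubDr (m s x : R) : expNsub l (m + s) x = expR (l * s) * expNsub l m x.
Proof. by rewrite /expNsub -expRD; congr expR; ring. Qed.

Lemma expNsub_mid (m x y : R) :
  expNsub l m ((x + y) / 2) = expNsub (l / 2) m x * expNsub (l / 2) m y.
Proof. by rewrite /expNsub -expRD; congr expR; field. Qed.

End expNsub_lemmas.

Lemma integral_scale_indic (d : measure_display) (T : measurableType d) (R : realType)
    (mu : {measure set T -> \bar R}) (k : R) (A : set T) :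
  0 <= k -> measurable A -> (\int[mu]_w (k * \1_A w)%:E = k%:E * mu A)%E.
Proof.
move=> k0 mA; under eq_integral do rewrite EFinM.
by rewrite ge0_integralZl ?integral_indic ?setIT //; apply/measurable_EFinP.
Qed.

Lemma expectation_expNsubDr (R : realType) (d : measure_display)
    (T : measurableType d) (P : probability T R) (V : {RV P >-> R}) (l m s : R) :
  ('E_P[expNsub l (m + s) \o V] = (expR (l * s))%:E * 'E_P[expNsub l m \o V])%E.
Proof.
rewrite !unlock -ge0_integralZl //=; last 2 first.
- by apply/measurable_EFinP; exact: (measurable_funP (expNsub l m \o V)).
- by move=> w _; rewrite lee_fin; exact: expR_ge0.
by apply: eq_integral => w _; rewrite -EFinM /= expNsubDr.
Qed.

Lemma le_expectation_ccdf (R : realType)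
    (d1 : measure_display) (T1 : measurableType d1) (P1 : probability T1 R)
    (d2 : measure_display) (T2 : measurableType d2) (P2 : probability T2 R)
    (V1 : {RV P1 >-> R}) (V2 : {RV P2 >-> R}) :
  (forall w, 0 <= V1 w) -> (forall w, 0 <= V2 w) ->
  (forall r, ccdf V1 r <= ccdf V2 r)%E -> ('E_P1[V1] <= 'E_P2[V2])%E.
Proof.
move=> V1_ge0 V2_ge0 le_ccdf.
rewrite !ge0_expectation_ccdf //; apply: ge0_le_integral => //.
- by apply: measurable_funTS; exact: ccdf_measurable.
- by apply: measurable_funTS; exact: ccdf_measurable.
Qed.

(* The stochastic order controls [P (U <= t)] while the layer-cake formula
   needs [P (U < t)]; shrinking the weight of [V] by a factor [q < 1], i.e.
   lowering its level by [ln q / l < 0], bridges the gap, and [lee_mul01Pr]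
   lets [q] tend to [1]. *)
Lemma le_expectation_expNsub (R : realType)
    (d1 : measure_display) (T1 : measurableType d1) (P1 : probability T1 R)
    (d2 : measure_display) (T2 : measurableType d2) (P2 : probability T2 R)
    (U : {RV P1 >-> R}) (V : {RV P2 >-> R}) (l m : R) :
  0 < l -> stoch_le P1 U P2 V ->
  ('E_P2[expNsub l m \o V] <= 'E_P1[expNsub l m \o U])%E.
Proof.
move=> l0 UV.
apply/lee_mul01Pr => [|q /andP[q0 q1]].
  by apply: expectation_ge0 => w; exact: expR_ge0.
pose s := ln q / l.
have s_lt0 : s < 0 by rewrite /s pmulr_llt0 ?invr_gt0 // ln_lt0 // q0 q1.
have qE : expR (l * s) = q by rewrite /s mulrC mulfVK ?lt0r_neq0 // lnK.
rewrite -[X in (X%:E * _)%E]qE -expectation_expNsubDr.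
apply: (le_expectation_ccdf (V1 := expNsub l (m + s) \o V) (V2 := expNsub l m \o U))
  => [w|w|r]; try exact: expR_ge0.
rewrite /ccdf /distribution /pushforward /=.
have [r0|r0] := lerP r 0.
  have -> : (expNsub l m \o U) @^-1` `]r, +oo[ = setT.
    apply/seteqP; split=> // w _ /=; rewrite in_itv /= andbT.
    exact: le_lt_trans r0 (expR_gt0 _).
  by rewrite probability_setT probability_le1 //; exact: measurable_funPTI.
pose c := m - ln r / l.
apply: (@le_trans _ _ (P2 (V @^-1` `]-oo, c + s]))).
  apply: le_measure; rewrite ?inE; try exact: measurable_funPTI.
  move=> w /=; rewrite !in_itv /= andbT expNsub_gt // => /ltW.
  by rewrite /c addrAC.
apply: (le_trans (UV _)); apply: le_measure; rewrite ?inE; try exact: measurable_funPTI.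
move=> w /=; rewrite !in_itv /= andbT expNsub_gt // => /le_lt_trans; apply.
by rewrite -/c gtrDl.
Qed.

Section two_copies.
Context (R : realType) (d : measure_display) (T : measurableType d)
  (P : probability T R) (X : {RV P >-> R}).

Definition copy1 : T * T -> R := X \o fst.
Definition copy2 : T * T -> R := X \o snd.
Definition mean2 : T * T -> R := fun w => (X w.1 + X w.2) / 2.

Let measurable_copy1 : measurable_fun setT copy1.
Proof. exact: measurableT_comp. Qed.
Let measurable_copy2 : measurable_fun setT copy2.
Proof. exact: measurableT_comp. Qed.
Let measurable_mean2 : measurable_fun setT mean2.
Proof.
apply: measurable_funM; last exact: measurable_cst.
by apply: measurable_funD; [exact: measurable_copy1 | exact: measurable_copy2].
Qed.

HB.instance Definition _ := isMeasurableFun.Build _ _ _ _ copy1 measurable_copy1.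
HB.instance Definition _ := isMeasurableFun.Build _ _ _ _ copy2 measurable_copy2.
HB.instance Definition _ := isMeasurableFun.Build _ _ _ _ mean2 measurable_mean2.

Definition copies (i : 'I_2) : {RV (P \x P)%E >-> R} :=
  if i == ord0 then (copy1 : {RV (P \x P)%E >-> R}) else (copy2 : {RV (P \x P)%E >-> R}).

Let product_measure_setX (A B : set T) : measurable A -> measurable B ->
  (((P \x P)%E : probability _ R) (A `*` B) = P A * P B)%E.
Proof. exact: product_measure1E. Qed.

Lemma copies_same_distribution i : same_distribution X (copies i).
Proof.
move=> A mA; have mXA : measurable (X @^-1` A) by exact: measurable_funPTI.
rewrite /copies; case: ifP => _.
- have -> : copy1 @^-1` A = (X @^-1` A) `*` setT.
    by apply/seteqP; split=> [[w1 w2] ?|[w1 w2] []].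
  by rewrite product_measure_setX // probability_setT mule1.
- have -> : copy2 @^-1` A = setT `*` (X @^-1` A).
    by apply/seteqP; split=> [[w1 w2] ?|[w1 w2] []].
  by rewrite product_measure_setX // probability_setT mul1e.
Qed.

Lemma copies_independent : mutually_independent copies.
Proof.
move=> B mB; pose i1 : 'I_2 := lift ord0 ord0.
have -> : \bigcap_i (copies i @^-1` B i) = (X @^-1` B ord0) `*` (X @^-1` B i1).
  apply/seteqP; split=> [w Bw|w [B0w B1w] i _].
  - by split; [exact: (Bw ord0 I) | exact: (Bw i1 I)].
  - have : (i == ord0) || (i == i1) by case: i => [[|[|k]] hk].
    by case/orP => /eqP ->.
rewrite product_measure_setX; try exact: measurable_funPTI.
by rewrite big_ord_recl big_ord1 -(copies_same_distribution ord0 (mB ord0))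
  -(copies_same_distribution i1 (mB i1)).
Qed.

Lemma Dplus_mean2_stoch_le : in_Dplus X -> stoch_le (P \x P)%E mean2 P X.
Proof.
move=> Dplus t.
have half_ge0 (i : 'I_2) : 0 <= (2^-1 : R) by rewrite invr_ge0 ler0n.
have halves : \sum_(i < 2) (2^-1 : R) = 1 by rewrite big_ord_recl big_ord1; field.
have := Dplus 1%N _ half_ge0 halves _ _ _ copies copies_independent
  copies_same_distribution t.
rewrite (copies_same_distribution ord0) //.
have -> : (fun w => \sum_(i < 2) 2^-1 * copies i w) = mean2.
  by apply/funext => w; rewrite big_ord_recl big_ord1 /= /mean2 mulrDl !(mulrC 2^-1).
by [].
Qed.

Lemma expectation_expNsub_mean2 (l m : R) :
  ('E_(P \x P)[expNsub l m \o mean2] =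
    'E_P[expNsub (l / 2) m \o X] * 'E_P[expNsub (l / 2) m \o X])%E.
Proof.
rewrite !unlock.
have mg : measurable_fun setT (fun w => (expNsub (l / 2) m (X w))%:E).
  by apply/measurable_EFinP; exact: (measurable_funP (expNsub (l / 2) m \o X)).
have g_ge0 w : (0 <= (expNsub (l / 2) m (X w))%:E)%E by rewrite lee_fin expR_ge0.
under eq_integral do rewrite /= /mean2 expNsub_mid EFinM.
rewrite fubini_tonelli1 /fubini_F /=; last 2 first.
- by apply: emeasurable_funM; exact: measurableT_comp mg _.
- by move=> z; apply: mule_ge0.
under eq_integral do rewrite ge0_integralZl //.
by rewrite ge0_integralZr // integral_ge0.
Qed.

End two_copies.

Section expNsub_bounds.
Context (R : realType) (d : measure_display) (T : measurableType d)
  (P : probability T R) (X : {RV P >-> R}) (l m : R).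
Hypothesis l0 : 0 < l.

Lemma expectation_expNsub_le (b r : R) : 0 <= b ->
  P (X @^-1` `]-oo, m[) = 0%E -> P (X @^-1` `[(m + b)%R, +oo[) = r%:E ->
  ('E_P[expNsub l m \o X] <= (1 - r * (1 - expR (- (l * b))))%:E)%E.
Proof.
move=> b0 below_m above_mb.
set A := X @^-1` `[(m + b)%R, +oo[ in above_mb *.
have mA : measurable A by exact: measurable_funPTI.
set e := expR (- (l * b)).
rewrite unlock.
apply: (@le_trans _ _ (\int[P]_w ((e * \1_A w)%:E + (\1_(~` A) w)%:E))%E).
  apply: ae_ge0_le_integral => //.
  - by move=> w _; rewrite lee_fin expR_ge0.
  - by apply/measurable_EFinP; exact: (measurable_funP (expNsub l m \o X)).
  - by move=> w _; apply: adde_ge0; rewrite lee_fin ?mulr_ge0 ?expR_ge0.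
  - apply: emeasurable_funD; apply/measurable_EFinP.
    + by apply: measurable_funM; [exact: measurable_cst | exact: measurable_indic].
    + by apply: measurable_indic; exact: measurableC.
  apply: filterS ((ae_notP P (measurable_funPTI X (measurable_itv _))).2 below_m).
  move=> w /= /negP; rewrite in_itv /= -leNgt => mX _.
  rewrite -EFinD lee_fin /expNsub !indicE in_setC.
  have [wA|wA] := boolP (w \in A); rewrite /= ?mulr1 ?addr0 ?mulr0 ?add0r.
  - rewrite ler_expR lerN2 ler_pM2l //.
    by move: wA; rewrite inE /A /= in_itv /= andbT; lra.
  - by rewrite expR_le1 oppr_le0 mulr_ge0 ?subr_ge0 // ltW.
rewrite ge0_integralD //; last 3 first.
- by move=> w _; rewrite lee_fin mulr_ge0 ?expR_ge0.
- by apply/measurable_EFinP; apply: measurable_funM;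
    [exact: measurable_cst | exact: measurable_indic].
- by apply/measurable_EFinP; apply: measurable_indic; exact: measurableC.
have -> : (\int[P]_w (e * \1_A w)%:E = e%:E * r%:E)%E.
  by rewrite integral_scale_indic ?expR_ge0 // -above_mb.
have -> : (\int[P]_w (\1_(~` A) w)%:E = 1 - r%:E)%E.
  rewrite integral_indic //; last exact: measurableC.
  by rewrite setIT -above_mb; exact: probability_setC.
by rewrite -EFinM -EFinB -EFinD lee_fin; lra.
Qed.

Lemma expectation_expNsub_ge (t p : R) :
  P (X @^-1` `]-oo, (m + t)%R]) = p%:E ->
  ((p * expR (- (l * t)))%:E <= 'E_P[expNsub l m \o X])%E.
Proof.
move=> below_mt; set B := X @^-1` `]-oo, (m + t)%R].
have mB : measurable B by exact: measurable_funPTI.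
rewrite mulrC EFinM -below_mt -integral_scale_indic ?expR_ge0 // unlock.
apply: ge0_le_integral => //.
- by apply/measurable_EFinP; apply: measurable_funM;
    [exact: measurable_cst | exact: measurable_indic].
- by apply/measurable_EFinP; exact: (measurable_funP (expNsub l m \o X)).
move=> w _; rewrite lee_fin /expNsub indicE.
have [wB|wB] := boolP (w \in B); last by rewrite mulr0 expR_ge0.
rewrite mulr1 ler_expR lerN2 ler_pM2l //.
by move: wB; rewrite inE /B /= in_itv /=; lra.
Qed.

End expNsub_bounds.

Theorem mainTheorem10 (R : realType) (d : measure_display) (T : measurableType d)
    (P : probability T R) (X : {RV P >-> R}) :
  {ae P, forall w, 0 <= X w} -> ~ degenerate X -> ~ in_Dplus X.
Proof.
move=> X_ge0 nondeg Dplus.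
have below_m := measure_lt_ess_inf X_ge0.
have near_m := measure_le_ess_infD_gt0 X_ge0.
have [b b0 mass_b] := nondegenerate_mass_above X_ge0 nondeg.
set m := fine (ess_inf P (EFin \o X)) in below_m near_m mass_b.
have finE (A : set R) : measurable A -> P (X @^-1` A) = (fine (P (X @^-1` A)))%:E.
  by move=> mA; rewrite fineK ?fin_num_measure //; exact: measurable_funPTI.
have rE := finE _ (measurable_itv `[(m + b)%R, +oo[).
set r := fine _ in rE; have r0 : 0 < r by rewrite -lte_fin -rE.
have pE := finE _ (measurable_itv `]-oo, (m + r * b / 4)%R]).
set p := fine _ in pE; have p0 : 0 < p by rewrite -lte_fin -pE near_m // divr_gt0 ?mulr_gt0.
have E_ge0 l : (0 <= 'E_P[expNsub l m \o X])%E.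
  by apply: expectation_ge0 => ?; exact: expR_ge0.
have E_le l : 0 < l -> ('E_P[expNsub l m \o X] <= (1 - r * (1 - expR (- (l * b))))%:E)%E.
  by move=> l0; have := expectation_expNsub_le l0 (ltW b0) below_m rE.
pose phi l := fine ('E_P[expNsub l m \o X])%E.
have phiE l : 0 < l -> ('E_P[expNsub l m \o X] = (phi l)%:E)%E.
  by move=> l0; rewrite fineK // ge0_fin_numE // (le_lt_trans (E_le l l0)) ?ltey.
apply: (sqr_half_no_expN_lower_bound r0 b0 p0 (phi := phi)) => l l0.
- by rewrite fine_ge0.
- rewrite -lee_fin -phiE // expr2 EFinM -phiE ?divr_gt0 // -expectation_expNsub_mean2.
  exact: le_expectation_expNsub l0 (Dplus_mean2_stoch_le Dplus).
- by rewrite -lee_fin -phiE ?E_le.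
- rewrite -lee_fin -phiE // (_ : r * b * l / 4 = l * (r * b / 4)); last by ring.
  by have := expectation_expNsub_ge l0 pE.
Qed.
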